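(* For every integer $n>2$, the number of triples $(x,y,z)\in\{1,\dots,n\}^3$ with $x<y<z$ and $\gcd(y-x,\,z-y,\,n)=1$ equals $\frac{n}{6}J_2(n)-\frac{n}{2}J_1(n)$.
   Context: Jordan's totient function of order $k\ge1$ is $J_k(n)=n^k\prod_{p\mid n,\ p\text{ prime}}\left(1-p^{-k}\right)$; in particular $J_1=\varphi$ is Euler's totient function. *)

From mathcomp Require Import all_boot all_order all_algebra.
Set Implicit Arguments. Unset Strict Implicit. Unset Printing Implicit Defensive.
Import Order.TTheory GRing.Theory Num.Theory.
Local Open Scope ring_scope.

Definition jordanJ (k n : nat) : rat :=
  (n%:R ^+ k) * \prod_(p <- primes n) (1 - (p%:R ^+ k)^-1).

Definition count_triples (n : nat) : nat :=
  #|[set t : 'I_n.+1 * 'I_n.+1 * 'I_n.+1 |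
      let: (x, y, z) := t in
      [&& (0 < x)%N, (x < y)%N, (y < z)%N &
          gcdn (gcdn (y - x)%N (z - y)%N) n == 1%N]]|.

From mathcomp Require Import all_boot all_order all_algebra.
From mathcomp Require Import zify ring.
Import GRing.Theory Num.Theory.
Set Implicit Arguments. Unset Strict Implicit. Unset Printing Implicit Defensive.

(* A triple 1 <= x < y < z <= n is determined by x and its gaps a = y - x and
   b = z - y, and for fixed gaps a, b > 0 there are exactly n - a - b choices
   of x.  Hence count_triples n = W n (primes n), where
     W m ps = sum over 0 < a, b < m such that no q in ps divides both a and b
              of (m - a - b).
   W is evaluated by inclusion-exclusion, one prime at a time: if the prime p
   divides m and is coprime to the primes of ps, the pairs (a, b) that are both
   divisible by p contribute p * W (m / p) ps, so that
     W m (p :: ps) = W m ps - p * W (m / p) ps,   and   W m [::] = 'C(m, 3).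
   The rational expression
     F m ps = m/6 * (m^2 P_2(ps) - 3 m P_1(ps) + 2 P_0(ps)),
     P_k(ps) = prod_(q in ps) (1 - q^-k),
   obeys the same recursion and base case, so W m ps = F m ps whenever ps is a
   duplicate-free list of primes dividing m.  For ps = primes n with n > 1 we
   have P_0 = 0 and n^k P_k = J_k(n), which is the theorem. *)

Lemma sum_lt_indicator N K :
  \sum_(0 <= x < N) (if x < K then 1 else 0) = minn N K.
Proof.
elim: N => [|N IH]; first by rewrite big_geq // min0n.
by rewrite big_nat_recr //= IH; case: ifP => H; lia.
Qed.

Lemma sum_offset_count N c :
  \sum_(0 <= x < N.+1) (if (0 < x) && (x + c <= N) then 1 else 0) = N - c.
Proof.
rewrite big_nat_recl //= add0n.
rewrite (eq_bigr (fun x => if x < N - c then 1 else 0)) ?sum_lt_indicator; first lia.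
by move=> x _; rewrite ltn_subRL; case: ifP; case: ifP => //; lia.
Qed.

Lemma sum_shift M x (H : nat -> nat) :
  \sum_(0 <= y < M) (if x < y then H y else 0) =
  \sum_(0 <= a < M) (if (0 < a) && (x + a < M) then H (x + a) else 0).
Proof.
have [xM|Mx] := ltnP x M; last first.
  by rewrite !big1_seq // => a; rewrite mem_index_iota => Ha; case: ifP => //; lia.
rewrite (big_cat_nat _ (n := x.+1)) //= big1_seq ?add0n; last first.
  by move=> y; rewrite mem_index_iota => Hy; case: ifP => //; lia.
rewrite -{1}(add0n x.+1) big_addn.
rewrite (big_cat_nat _ (n := M - x) (p := M)) //=; last lia.
rewrite [X in _ = _ + X]big1_seq ?addn0; last first.
  by move=> a; rewrite mem_index_iota => Ha; case: ifP => //; lia.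
have -> : M - x = (M - x.+1).+1 by lia.
rewrite big_nat_recl //= add0n; apply: eq_big_nat => a Ha.
have -> : x + a.+1 < M by lia.
by rewrite leq_addl; congr H; lia.
Qed.

Lemma sum_dvd_reindex p k (F : nat -> nat) : 0 < p ->
  \sum_(0 <= a < p * k) (if p %| a then F a else 0) = \sum_(0 <= a < k) F (p * a).
Proof.
move=> p_gt0; elim: k => [|k IH]; first by rewrite muln0 !big_geq.
rewrite big_nat_recr //= -IH mulnS addnC (big_cat_nat _ (n := p * k)) //=; last lia.
congr (_ + _); rewrite big_ltn; last lia.
rewrite dvdn_mulr // big1_seq ?addn0 // => a; rewrite mem_index_iota => range_a.
case: ifP => // /dvdnP [j def_a]; move: range_a; rewrite def_a [j * p]mulnC -mulnSr.
by rewrite !ltn_pmul2l //; lia.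
Qed.

Lemma sum_pairs_by_gaps N x (F : nat -> nat -> nat) :
  \sum_(0 <= y < N.+1) \sum_(0 <= z < N.+1)
     (if [&& 0 < x, x < y & y < z] then F (y - x) (z - y) else 0) =
  \sum_(0 <= a < N.+1) \sum_(0 <= b < N.+1)
     (if [&& 0 < x, 0 < a, 0 < b & x + a + b <= N] then F a b else 0).
Proof.
have [->|x_gt0] := posnP x; first by rewrite !big1 // => y _; rewrite big1.
transitivity (\sum_(0 <= y < N.+1) (if x < y then
    \sum_(0 <= z < N.+1) (if y < z then F (y - x) (z - y) else 0) else 0)).
  apply: eq_bigr => y _; case: ifP => xy; last by rewrite big1 // => z _; rewrite xy.
  by apply: eq_bigr => z _.
rewrite sum_shift; apply: eq_bigr => a _; rewrite sum_shift.
case: ifP => Ha; last by rewrite big1 // => b _; case: ifP => //; move: Ha; lia.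
apply: eq_bigr => b _; rewrite addKn addnC addnK addnC.
by case: ifP => Hb; case: ifP => Hc //; move: Ha Hb Hc; lia.
Qed.

(* Sums over triples 0 < x < y < z <= N of a function of the gaps: each pair of
   gaps (a, b) occurs for exactly N - a - b values of x. *)
Lemma sum_triples_by_gaps N (F : nat -> nat -> nat) :
  \sum_(0 <= x < N.+1) \sum_(0 <= y < N.+1) \sum_(0 <= z < N.+1)
     (if [&& 0 < x, x < y & y < z] then F (y - x) (z - y) else 0) =
  \sum_(0 <= a < N) \sum_(0 <= b < N)
     (if (0 < a) && (0 < b) then F a b * (N - a - b) else 0).
Proof.
under eq_bigr do rewrite sum_pairs_by_gaps.
rewrite exchange_big /=; under eq_bigr do rewrite exchange_big /=.
have gaps_count a b : \sum_(0 <= x < N.+1)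
    (if [&& 0 < x, 0 < a, 0 < b & x + a + b <= N] then F a b else 0) =
    (if (0 < a) && (0 < b) then F a b * (N - a - b) else 0).
  case: ifP => [/andP [-> ->]|ab]; last first.
    rewrite big1 // => x _; case: ifP => // /and4P [_ a_gt0 b_gt0 _].
    by rewrite a_gt0 b_gt0 in ab.
  rewrite -subnDA -sum_offset_count big_distrr /=; apply: eq_bigr => x _.
  by rewrite addnA; case: ifP; rewrite ?muln1 ?muln0.
under eq_bigr do under eq_bigr do rewrite gaps_count.
(* A gap equal to N leaves no room for x, so the ranges shrink to 0..N-1. *)
rewrite big_nat_recr //= [X in _ + X]big1 ?addn0; last first.
  by move=> b _; rewrite subnn sub0n muln0; case: ifP.
apply: eq_bigr => a _; rewrite big_nat_recr //= subnAC subnn sub0n muln0.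
by rewrite if_same addn0.
Qed.

Definition avoids (ps : seq nat) (a b : nat) : bool :=
  all (fun q => ~~ ((q %| a) && (q %| b))) ps.

(* The weighted count of gap pairs (a, b) avoiding ps, with weight m - a - b
   (which vanishes when a + b >= m). *)
Definition W (m : nat) (ps : seq nat) : nat :=
  \sum_(0 <= a < m) \sum_(0 <= b < m)
     (if [&& 0 < a, 0 < b & avoids ps a b] then m - a - b else 0).

Lemma gcd_eq1_avoids n a b : 0 < n ->
  (gcdn (gcdn a b) n == 1) = avoids (primes n) a b.
Proof.
move=> n_gt0; apply/idP/allP => [/eqP g1 q|avoid].
  rewrite mem_primes => /and3P [q_pr _ q_n]; apply/negP => /andP [q_a q_b].
  have : q %| gcdn (gcdn a b) n by rewrite !dvdn_gcd q_a q_b q_n.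
  by rewrite g1 dvdn1 => /eqP q1; rewrite q1 in q_pr.
set d := gcdn (gcdn a b) n; case: eqP => // d_neq1.
have d_gt0 : 0 < d by rewrite gcdn_gt0 n_gt0 orbT.
have d_gt1 : 1 < d by lia.
have p_d := pdiv_dvd d.
have p_n : pdiv d %| n by apply: dvdn_trans p_d (dvdn_gcdr _ _).
have := avoid (pdiv d); rewrite mem_primes pdiv_prime // n_gt0 p_n => /(_ isT).
by rewrite -dvdn_gcd (dvdn_trans p_d (dvdn_gcdl _ _)).
Qed.

Lemma count_triplesE n : 0 < n -> count_triples n = W n (primes n).
Proof.
move=> n_gt0.
pose F a b := if gcdn (gcdn a b) n == 1 then 1 else 0.
transitivity (\sum_(0 <= x < n.+1) \sum_(0 <= y < n.+1) \sum_(0 <= z < n.+1)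
   (if [&& 0 < x, x < y & y < z] then F (y - x) (z - y) else 0)).
  rewrite big_mkord; under eq_bigr do rewrite big_mkord; under eq_bigr do
    under eq_bigr do rewrite big_mkord.
  rewrite !pair_bigA /count_triples -sum1dep_card big_mkcond /=.
  apply: eq_bigr => [[[x y] z]] _ /=.
  by rewrite /F; do 3 case: (_ < _) => //=; case: (_ == _).
rewrite sum_triples_by_gaps /W; apply: eq_bigr => a _; apply: eq_bigr => b _.
rewrite /F gcd_eq1_avoids //.
by case: (0 < a); case: (0 < b); case: (avoids _ _ _); rewrite ?mul1n ?mul0n.
Qed.

Lemma sum_bin2 N K : K <= N ->
  \sum_(0 <= b < N) (if 0 < b then K - b else 0) = 'C(K, 2).
Proof.
elim: K => [|K IH] le_KN; first by rewrite big1 // => b _; rewrite sub0n if_same.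
have below_K : \sum_(0 <= b < N) (if 0 < b then (b < K.+1 : nat) else 0) = K.
  have -> : N = N.-1.+1 by lia.
  rewrite big_nat_recl //= add0n.
  rewrite (eq_bigr (fun b => if b < K then 1 else 0)) ?sum_lt_indicator; first lia.
  by move=> b _; rewrite ltnS.
rewrite binS bin1 -IH; last lia.
rewrite -[X in _ + X]below_K.
rewrite -big_split /=; apply: eq_bigr => b _.
by case: (0 < b) => //; case: (ltnP b K.+1) => /= h; lia.
Qed.

Lemma sum_bin3 m : \sum_(0 <= a < m) (if 0 < a then 'C(m - a, 2) else 0) = 'C(m, 3).
Proof.
elim: m => [|m IH]; first by rewrite big_geq.
rewrite binS -IH.
case: m IH => [|m] IH; first by rewrite big_nat1 big_geq.
rewrite big_nat_recl // [in RHS]big_nat_recl //= !add0n big_nat_recl // addnC.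
by congr (_ + _); apply: eq_bigr => a _; rewrite !subSS.
Qed.

Lemma W_nil m : W m [::] = 'C(m, 3).
Proof.
rewrite /W -sum_bin3; apply: eq_big_nat => a lt_am.
case: (posnP a) => [->|a_gt0]; first by rewrite big1.
rewrite -(@sum_bin2 m); last lia.
by apply: eq_bigr => b _; rewrite /avoids /= andbT.
Qed.

(* Inclusion-exclusion step: the pairs avoiding ps but both divisible by a
   prime p (coprime to ps) are p times the pairs of W k ps, with weight
   p * k - p * a - p * b = p * (k - a - b). *)
Lemma W_cons p ps k : prime p -> all (fun q => coprime q p) ps ->
  W (p * k) ps = W (p * k) (p :: ps) + p * W k ps.
Proof.
move=> p_pr cop; have p_gt0 := prime_gt0 p_pr.
have p_multiples : p * W k ps = \sum_(0 <= a < p * k) (if p %| a then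
    \sum_(0 <= b < p * k) (if p %| b then
      (if [&& 0 < a, 0 < b & avoids ps a b] then p * k - a - b else 0) else 0)
    else 0).
  rewrite sum_dvd_reindex // /W big_distrr /=; apply: eq_bigr => a _.
  rewrite sum_dvd_reindex // big_distrr /=; apply: eq_bigr => b _.
  have -> : avoids ps (p * a) (p * b) = avoids ps a b.
    apply: eq_in_all => q q_ps /=.
    by have cop_q := allP cop q q_ps; rewrite !Gauss_dvdr.
  by rewrite !muln_gt0 p_gt0 -!mulnBr; case: ifP; rewrite ?muln0.
rewrite p_multiples /W -big_split /=; apply: eq_bigr => a _.
case: ifP => p_a; last by rewrite addn0; apply: eq_bigr => b _.
rewrite -big_split /=; apply: eq_bigr => b _.
by case: (p %| b); rewrite /= ?p_a ?andbF ?addn0.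
Qed.

Local Open Scope ring_scope.

Definition euler_prod (k : nat) (ps : seq nat) : rat :=
  \prod_(q <- ps) (1 - (q%:R ^+ k)^-1).

Definition closed_form (m : nat) (ps : seq nat) : rat :=
  m%:R / 6%:R * (m%:R ^+ 2 * euler_prod 2 ps - 3%:R * m%:R * euler_prod 1 ps
                 + 2%:R * euler_prod 0 ps).

Lemma closed_form_nil m : ('C(m, 3))%:R = closed_form m [::].
Proof.
rewrite /closed_form /euler_prod !big_nil.
case: m => [|[|m]]; first by rewrite /= !mul0r.
  by rewrite bin_small //; field.
have bin3E : ('C(m.+2, 3) * 6 = m.+2 * (m.+1 * m))%N.
  by rewrite (bin_ffact m.+2 3) !ffactnS ffactn0 muln1.
have -> : ('C(m.+2, 3))%:R = (m.+2 * (m.+1 * m))%:R / 6%:R :> rat.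
  by rewrite -bin3E natrM mulfK.
by rewrite !natrM -[m.+2]addn2 -[m.+1]addn1 !natrD; field.
Qed.

Lemma closed_form_cons (p k : nat) ps : (0 < p)%N ->
  closed_form (p * k) ps - p%:R * closed_form k ps = closed_form (p * k) (p :: ps).
Proof.
move=> p_gt0; have p_neq0 : p%:R != 0 :> rat by rewrite pnatr_eq0 -lt0n.
rewrite /closed_form /euler_prod !big_cons /= expr0 invr1 subrr mul0r mulr0.
by rewrite addr0 natrM expr1; field.
Qed.

Lemma W_closed_form ps (m : nat) :
  uniq ps -> all prime ps -> all (fun q => q %| m)%N ps ->
  (W m ps)%:R = closed_form m ps.
Proof.
elim: ps m => [|p ps IH] m; first by rewrite W_nil closed_form_nil.
move=> /= /andP [p_ps uniq_ps] /andP [p_pr ps_pr] /andP [p_m ps_m].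
have [k def_m] : exists k, m = (p * k)%N by exists (m %/ p)%N; rewrite mulnC divnK.
have cop : all (fun q => coprime q p) ps.
  apply/allP => q q_ps; have q_pr := allP ps_pr q q_ps.
  rewrite prime_coprime // dvdn_prime2 //.
  by apply/negP => /eqP q_p; rewrite -q_p q_ps in p_ps.
have ps_k : all (fun q => q %| k)%N ps.
  apply/allP => q q_ps; have := allP ps_m q q_ps.
  by rewrite def_m /= Gauss_dvdr // (allP cop).
rewrite def_m -closed_form_cons ?prime_gt0 // -!IH //; last by rewrite -def_m.
by rewrite (W_cons k p_pr cop) natrD natrM addrK.
Qed.

Lemma euler_prod0_primes n : (1 < n)%N -> euler_prod 0 (primes n) = 0.
Proof.
move=> n_gt1; have p_n : pdiv n \in primes n.
  by rewrite mem_primes pdiv_prime ?pdiv_dvd //; lia.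
rewrite /euler_prod (perm_big _ (perm_to_rem p_n)) big_cons /=.
by rewrite expr0 invr1 subrr mul0r.
Qed.

Theorem mainTheorem5 (n : nat) (hn : (2 < n)%N) :
  (count_triples n)%:R =
    (n%:R / 6%:R) * jordanJ 2 n - (n%:R / 2%:R) * jordanJ 1 n :> rat.
Proof.
have ps_prime : all prime (primes n).
  by apply/allP => q; rewrite mem_primes => /andP [].
have ps_dvd : all (fun q => q %| n)%N (primes n).
  by apply/allP => q; rewrite mem_primes => /and3P [].
rewrite count_triplesE; last lia.
rewrite W_closed_form ?primes_uniq // /closed_form euler_prod0_primes; last lia.
rewrite /jordanJ -/(euler_prod 2 _) -/(euler_prod 1 _) expr1.
by field.
Qed.
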